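(* Let $\mathbf{X}=(X_n)_{n\in\mathbb{N}}$ be a stationary ergodic (scalar or vector) information source with values in a proper interval $I^d\subsetneq\mathbb{R}^d$, $d\ge1$, where for $d>1$ the interval $I^d$ carries the lexicographic order. Then its differential permutation entropy rate equals its differential entropy rate: $h_m^{*}(\mathbf{X})=h_m(\mathbf{X})$.
   Context: For $\Delta>0$, a uniform discretization of $\mathbf{X}$ at resolution $\Delta$ is obtained from a partition $\delta=\{\Delta_1,\ldots,\Delta_N\}$ of $I^d$ into Lebesgue-measurable cells with $\lambda(\Delta_i)=\lambda(I^d)/N=\Delta$ ($\lambda$ = Lebesgue measure), and the discretized source $\mathbf{X}^\Delta=(X_n^\Delta)$ with alphabet $A^\Delta=\{1,\ldots,N\}$ is given by $X_n^\Delta=i$ iff $X_n\in\Delta_i$. Its sequence-space model is $(A^{\Delta\mathbb{N}},\mathcal{Z}^\Delta,m^\Delta,\sigma)$. The metric entropy rate of $\mathbf{X}^\Delta$ is $h_{m^\Delta}(\mathbf{X}^\Delta)=\lim_{L\to\infty}\frac1L H(X^\Delta{}_1^L)$, where $H$ is Shannon entropy (base 2) and $X^\Delta{}_1^L=X_1^\Delta\cdots X_L^\Delta$. The rank variables of the discretized source are $R_n^\Delta=\sum_{i=1}^n\delta(X_i^\Delta\le X_n^\Delta)$ ($\delta(P)=1$ if $P$ holds, $0$ otherwise), and the permutation entropy rate at resolution $\Delta$ is $h^*_{m^\Delta}(\mathbf{X}^\Delta)=\lim_{L\to\infty}\frac{1}{L-1}H(R^\Delta{}_1^L)$. The differential entropy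 rate is $h_m(\mathbf{X})=\lim_{\Delta\to0}\big(h_{m^\Delta}(\mathbf{X}^\Delta)+\log\Delta\big)$ and the differential permutation entropy rate is $h_m^*(\mathbf{X})=\lim_{\Delta\to0}\big(h^*_{m^\Delta}(\mathbf{X}^\Delta)+\log\Delta\big)$. *)

From HB Require Import structures.
From mathcomp Require Import all_boot all_order all_algebra.
From mathcomp Require Import all_classical all_reals all_analysis.

Set Implicit Arguments.
Unset Strict Implicit.
Unset Printing Implicit Defensive.

Import Order.TTheory GRing.Theory Num.Theory.
Import numFieldNormedType.Exports.

Local Open Scope classical_set_scope.
Local Open Scope ring_scope.

Section Defs.
Variable R : realType.

Section Lebesgue_d.
Variable d : nat.

Definition box (a b : d.-tuple R) : set (d.-tuple R) :=
  [set x | forall k : 'I_d, tnth a k <= tnth x k <= tnth b k].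

Definition box_vol (a b : d.-tuple R) : R :=
  \prod_(k < d) (tnth b k - tnth a k).

Definition lebesgue_outer (A : set (d.-tuple R)) : \bar R :=
  ereal_inf [set s | exists a b : nat -> d.-tuple R,
     [/\ (forall n (k : 'I_d), tnth (a n) k <= tnth (b n) k),
         A `<=` \bigcup_n box (a n) (b n) &
         s = (\sum_(0 <= n <oo) (box_vol (a n) (b n))%:E)%E]].

Definition lebesgue_measurable (A : set (d.-tuple R)) : Prop :=
  forall E : set (d.-tuple R),
    lebesgue_outer E = (lebesgue_outer (E `&` A) + lebesgue_outer (E `&` ~` A))%E.

End Lebesgue_d.

Definition cube (d : nat) (I : set R) : set (d.-tuple R) :=
  [set x | forall k : 'I_d, I (tnth x k)].

Definition uniform_partition (d N : nat) (Id : set (d.-tuple R))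
    (C : 'I_N -> set (d.-tuple R)) : Prop :=
  [/\ (forall i j : 'I_N, i != j -> C i `&` C j = set0),
      \bigcup_(i in [set: 'I_N]) C i = Id,
      (forall i, lebesgue_measurable (C i)) &
      (forall i, (lebesgue_outer (C i) * (N%:R)%:E)%E = lebesgue_outer Id)].

Definition xlog2x (x : R) : R := if x == 0 then 0 else x * (ln x / ln 2).

Definition shannon (U : finType) (p : U -> R) : R := - \sum_(u : U) xlog2x (p u).

Section Source.
Variables (dO : measure_display) (O : measurableType dO)
  (P : probability O R) (T : O -> O) (d : nat) (f : O -> d.-tuple R).

(* X_{k+1}(w) = f (T^k w) *)
Definition X (k : nat) (w : O) : d.-tuple R := f (iter k T w).

Variables (N : nat) (C : 'I_N -> set (d.-tuple R)).

Definition word_event (L : nat) (w : {ffun 'I_L -> 'I_N}) : set O :=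
  [set om | forall k : 'I_L, C (w k) (X k om)].

Definition block_entropy (L : nat) : R :=
  shannon (fun w : {ffun 'I_L -> 'I_N} => fine (P (word_event w))).

Definition metric_entropy_rate : R :=
  limn (fun L => block_entropy L / L%:R).

(* rank variables R_n = #{ i <= n : X_i <= X_n } of a word (n = 1..L,
   encoded by 'I_L; values in {1..L} stored in 'I_L.+1) *)
Definition rank_vec (L : nat) (w : {ffun 'I_L -> 'I_N}) : {ffun 'I_L -> 'I_L.+1} :=
  [ffun n : 'I_L => inord #|[set i : 'I_L | (i <= n)%N && (w i <= w n)%N]|].

Definition rank_event (L : nat) (r : {ffun 'I_L -> 'I_L.+1}) : set O :=
  [set om | exists w : {ffun 'I_L -> 'I_N}, word_event w om /\ rank_vec w = r].

Definition rank_block_entropy (L : nat) : R :=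
  shannon (fun r : {ffun 'I_L -> 'I_L.+1} => fine (P (rank_event r))).

Definition permutation_entropy_rate : R :=
  limn (fun L => rank_block_entropy L / (L.-1)%:R).

End Source.

Definition log2 (x : R) : R := ln x / ln 2.

End Defs.

(* At a fixed resolution the discretized source has the finite alphabet
   {1, ..., N}, so it suffices to prove h* = h for each N.  A word w of
   length L is determined by its rank vector together with the counts
   #{i | w_i <= k}, k < N: the rank vector fixes the stable sorting
   permutation of w and the counts fix the sorted word.  Hence at most
   (L+1)^N words share a rank vector, and grouping words by rank vector gives
     H(R_1^L) <= H(X_1^L) <= H(R_1^L) + N log (L+1).
   Since also H(X_1^L) = O(L), the normalised block entropies H(X_1^L)/L and
   H(R_1^L)/(L-1) differ by O(log L / L), so they have the same limits. *)

From HB Require Import structures.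
From mathcomp Require Import all_boot all_order all_algebra.
From mathcomp Require Import all_classical all_reals all_analysis.
From mathcomp Require Import ring lra zify.

Set Implicit Arguments.
Unset Strict Implicit.
Unset Printing Implicit Defensive.

Import Order.TTheory GRing.Theory Num.Theory.
Import numFieldNormedType.Exports.

Local Open Scope classical_set_scope.
Local Open Scope ring_scope.

Section Entropy.
Variable R : realType.
Implicit Types (p q M : R).

Lemma ln2_gt0 : 0 < ln (2 : R).
Proof. by apply: ln_gt0; rewrite ltr1n. Qed.

Lemma ln_le_subr1 x : 0 < x -> ln x <= x - 1 :> R.
Proof.
by move=> x0; have := @le_ln1Dx R (x - 1); rewrite (addrC 1) subrK; apply; lra.
Qed.

Lemma log2X x n : 0 < x -> log2 (x ^+ n) = n%:R * log2 x :> R.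
Proof. by move=> x0; rewrite /log2 lnXn // mulr_natl mulrnAl. Qed.

Lemma shannonE (U : finType) (p : U -> R) :
  shannon p = - (\sum_u p u * ln (p u)) / ln 2.
Proof.
rewrite /shannon mulNr mulr_suml; congr (- _); apply: eq_bigr => u _.
by rewrite /xlog2x mulrA; case: eqP => [->|]; rewrite ?mul0r.
Qed.

Lemma shannon_ge0 (U : finType) (p : U -> R) :
  (forall u, 0 <= p u <= 1) -> 0 <= shannon p.
Proof.
move=> p01; rewrite shannonE divr_ge0 ?(ltW ln2_gt0) // oppr_ge0.
apply: sumr_le0 => u _; have /andP[p0 p1] := p01 u.
by rewrite mulr_ge0_le0 // ln_le0.
Qed.

Lemma mulr_ln_le p q : 0 <= p <= q -> p * ln p <= p * ln q.
Proof.
have [->|p_neq0 /andP[p_ge0 pq]] := eqVneq p 0; first by rewrite !mul0r.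
have p0 : 0 < p by rewrite lt0r p_neq0.
by rewrite ler_wpM2l ?ler_ln ?posrE //; lra.
Qed.

(* [ln x <= x - 1] at [x = q / (p M)], multiplied by [p]. *)
Lemma mulr_ln_ratio_le p q M : 0 <= p <= q -> 0 < M ->
  p * ln q - p * ln p - p * ln M <= q / M - p.
Proof.
have [->|p_neq0 /andP[p_ge0 pq] M0] := eqVneq p 0.
  by move=> /andP[_ q0] M0; rewrite !mul0r !subr0 divr_ge0 // ltW.
have p0 : 0 < p by rewrite lt0r p_neq0.
have q0 : 0 < q by lra.
have := ler_wpM2l (ltW p0) (ln_le_subr1 (divr_gt0 q0 (mulr_gt0 p0 M0))).
rewrite ln_div ?lnM ?posrE ?mulr_gt0 //.
have -> : p * (q / (p * M) - 1) = q / M - p by field; rewrite !gt_eqF.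
by rewrite !mulrBr mulrDr opprD addrA.
Qed.

Lemma sum_mulr_ln_bounds (U : finType) (A : pred U) (p : U -> R) M :
  (forall u, 0 <= p u) -> 0 < M -> #|A|%:R <= M ->
  \sum_(u in A) p u * ln (p u) <= (\sum_(u in A) p u) * ln (\sum_(u in A) p u)
  <= \sum_(u in A) p u * ln (p u) + (\sum_(u in A) p u) * ln M.
Proof.
move=> p0 M0 AM; set s := \sum_(u in A) p u.
have le_ps u : u \in A -> 0 <= p u <= s.
  by move=> Au; rewrite p0 /s (bigD1 u Au) /= lerDl sumr_ge0.
apply/andP; split.
  by rewrite {1}/s mulr_suml ler_sum // => u /le_ps/mulr_ln_le.
have : \sum_(u in A) (p u * ln s - p u * ln (p u) - p u * ln M) <=
        \sum_(u in A) (s / M - p u).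
  by apply: ler_sum => u /le_ps /mulr_ln_ratio_le; apply.
rewrite !sumrB -!mulr_suml -/s sumr_const.
have : s *+ #|A| / M <= s.
  by rewrite -mulr_natr -mulrA ler_piMr ?sumr_ge0 // ler_pdivrMr // mul1r.
lra.
Qed.

Definition image_mass {U V : finType} (g : U -> V) (p : U -> R) (v : V) : R :=
  \sum_(u | g u == v) p u.

Lemma shannon_image_bounds (U V : finType) (g : U -> V) (p : U -> R) M :
  (forall u, 0 <= p u) -> \sum_u p u <= 1 -> 1 <= M ->
  (forall v, #|[pred u | g u == v]|%:R <= M) ->
  shannon (image_mass g p) <= shannon p <= shannon (image_mass g p) + log2 M.
Proof.
move=> p0 p_le1 M1 fibreM.
have M0 : 0 < M by lra.
have partition F : \sum_u F u = \sum_v \sum_(u | g u == v) F u :> R.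
  exact: partition_big.
have fibre v := sum_mulr_ln_bounds p0 M0 (fibreM v).
have lower : \sum_u p u * ln (p u) <= \sum_v image_mass g p v * ln (image_mass g p v).
  by rewrite partition; apply: ler_sum => v _; case/andP: (fibre v).
have upper : \sum_v image_mass g p v * ln (image_mass g p v) <=
             \sum_u p u * ln (p u) + ln M.
  rewrite partition.
  apply: le_trans (_ : \sum_v (\sum_(u | g u == v) p u * ln (p u) +
      image_mass g p v * ln M) <= _).
    by apply: ler_sum => v _; case/andP: (fibre v).
  rewrite big_split lerD2l /= -mulr_suml ler_piMl ?ln_ge0 //.
  by rewrite /image_mass -partition.
rewrite !shannonE /log2 -mulrDl !ler_wpM2r ?invr_ge0 ?(ltW ln2_gt0) //; lra.
Qed.

Lemma shannon_le_log2 (U : finType) (p : U -> R) M :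
  (forall u, 0 <= p u) -> \sum_u p u <= 1 -> 1 <= M -> #|U|%:R <= M ->
  shannon p <= log2 M + 1 / ln 2.
Proof.
move=> p0 p_le1 M1 UM.
have fibreM (v : unit) : #|[pred u : U | tt == v]|%:R <= M.
  by case: v; apply: le_trans UM; rewrite ler_nat subset_leq_card.
have /andP[_] := shannon_image_bounds p0 p_le1 M1 fibreM.
set s := image_mass (fun=> tt) p tt.
have s0 : 0 <= s by apply: sumr_ge0.
(* Lumping [U] into one atom of mass [s] loses at most [log2 M], and that
   atom has entropy [- s log2 s <= 1 / ln 2]. *)
suff : shannon (image_mass (fun=> tt) p) <= 1 / ln 2 by lra.
rewrite shannonE (big_pred1 tt) -?/s; last by case.
rewrite ler_wpM2r ?invr_ge0 ?(ltW ln2_gt0) //.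
have [->|s_neq0] := eqVneq s 0; first by rewrite mul0r oppr0.
have s_gt0 : 0 < s by rewrite lt0r s_neq0.
have inv_s_gt0 : 0 < s^-1 by rewrite invr_gt0.
have := ler_wpM2l s0 (ln_le_subr1 inv_s_gt0).
rewrite lnV ?posrE // mulrBr mulfV // mulr1 mulrN; lra.
Qed.

End Entropy.

Lemma in_set_predE (T : Type) (P : pred T) x : (x \in [set y | P y]) = P x.
Proof. by apply/idP/idP => [/set_mem|/mem_set]. Qed.

Section RankVector.
Local Close Scope classical_set_scope.
Variables L N : nat.
Implicit Types (w : {ffun 'I_L -> 'I_N}) (i j n : 'I_L).

Definition rank_set w n := [set i : 'I_L | (i <= n)%N && (w i <= w n)%N].

Lemma card_lt_ordS (T : finType) (A : {pred T}) : #|T| = L -> (#|A| < L.+1)%N.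
Proof. by move=> <-; rewrite ltnS max_card. Qed.

Lemma rank_vecE w n : rank_vec w n = #|rank_set w n| :> nat.
Proof.
rewrite ffunE inordK ?card_lt_ordS ?card_ord //.
by apply: eq_card => i; rewrite in_set_predE inE.
Qed.

(* Knowing the order relations among [w_0, ..., w_(n-1)], the sets
   [{i < n | w_i <= w_n}] are down-closed, hence nested. *)
Lemma rank_set_crossing w w' n i j :
  (forall a b : 'I_L, (a <= b < n)%N -> (w a <= w b)%N = (w' a <= w' b)%N) ->
  i \in rank_set w n -> i \notin rank_set w' n ->
  j \in rank_set w' n -> j \notin rank_set w n -> (i <= j)%N -> False.
Proof.
move=> agree; rewrite !inE => /andP[ni wi]; rewrite ni /= -ltnNge => w'i.
move=> /andP[nj w'j]; rewrite nj /= -ltnNge => wj ij.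
have jn : (j < n)%N.
  by rewrite ltn_neqAle nj andbT; apply: contraTneq wj => /val_inj ->; rewrite ltnn.
by have := agree i j; rewrite ij jn => /(_ isT); lia.
Qed.

Lemma rank_set_eq w w' :
  rank_vec w = rank_vec w' -> forall n, rank_set w n = rank_set w' n.
Proof.
move=> eq_rank; suff IH m n : (n < m)%N -> rank_set w n = rank_set w' n.
  by move=> n; exact: (IH n.+1).
elim: m n => [//|m IH] n; rewrite ltnS leq_eqVlt => /orP[/eqP n_eq|]; last exact: IH.
have agree (a b : 'I_L) : (a <= b < n)%N -> (w a <= w b)%N = (w' a <= w' b)%N.
  by case/andP=> ab; rewrite n_eq => /IH /setP /(_ a); rewrite !inE ab.
have card_eq : #|rank_set w n| = #|rank_set w' n| by rewrite -!rank_vecE eq_rank.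
have [sub|nsub] := boolP (rank_set w n \subset rank_set w' n).
  by apply/eqP; rewrite eqEcard sub card_eq leqnn.
have /subsetPn[i iw niw'] := nsub.
suff sub' : rank_set w' n \subset rank_set w n.
  by apply/esym/eqP; rewrite eqEcard sub' card_eq leqnn.
apply/fintype.subsetP => j jw'; apply/negPn/negP => njw.
have [ij|/ltnW ji] := leqP i j.
  exact: (rank_set_crossing agree iw niw' jw' njw ij).
have agree' (a b : 'I_L) : (a <= b < n)%N -> (w' a <= w' b)%N = (w a <= w b)%N.
  by move/agree.
exact: (rank_set_crossing agree' jw' njw iw niw' ji).
Qed.

Lemma rank_vec_order w w' : rank_vec w = rank_vec w' ->
  forall i n, (i <= n)%N -> (w i <= w n)%N = (w' i <= w' n)%N.
Proof.
move=> /rank_set_eq eq_set i n ni.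
by move/setP: (eq_set n) => /(_ i); rewrite !inE ni.
Qed.

(* [i] is in [lex_set w n] iff [(w_i, i) <= (w_n, n)] lexicographically. *)
Definition lex_set w n :=
  [set i : 'I_L | if (i <= n)%N then (w i <= w n)%N else (w i < w n)%N].

Lemma lex_set_eq w w' :
  rank_vec w = rank_vec w' -> forall n, lex_set w n = lex_set w' n.
Proof.
move=> eq_rank n; apply/setP => i; rewrite !inE; case: (leqP i n) => [ni|/ltnW ni].
  by rewrite (rank_vec_order eq_rank ni).
by rewrite !ltnNge (rank_vec_order eq_rank ni).
Qed.

Definition count_le w (k : nat) := #|[set i : 'I_L | (w i <= k)%N]|.

Lemma count_le_lt_card_lex_set w n (k : nat) :
  (k < w n)%N -> (count_le w k < #|lex_set w n|)%N.
Proof.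
move=> kn; apply/proper_card/properP; split.
  by apply/fintype.subsetP => i; rewrite !inE; case: (leqP i n) => _ wik; lia.
by exists n; rewrite !inE ?leqnn //; lia.
Qed.

Lemma card_lex_set_le_count_le w n (k : nat) :
  (w n <= k)%N -> (#|lex_set w n| <= count_le w k)%N.
Proof.
move=> nk; apply/subset_leq_card/fintype.subsetP => i.
by rewrite !inE; case: (leqP i n) => _ win; lia.
Qed.

(* [#|lex_set w n|] is the position of [w_n] in the stable sort of [w]; the
   counts [count_le w] then pin down its value. *)
Lemma rank_vec_count_le_inj w w' : rank_vec w = rank_vec w' ->
  (forall k : 'I_N, count_le w k = count_le w' k) -> w = w'.
Proof.
move=> eq_rank eq_count; apply/ffunP => n; apply/val_inj/eqP; rewrite eqn_leq.
have eq_lex := lex_set_eq eq_rank n.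
apply/andP; split; rewrite leqNgt; apply/negP => lt_n.
- have := count_le_lt_card_lex_set lt_n.
  by rewrite eq_count eq_lex ltnNge card_lex_set_le_count_le.
- have := count_le_lt_card_lex_set lt_n.
  by rewrite -eq_count -eq_lex ltnNge card_lex_set_le_count_le.
Qed.

Lemma card_rank_vec_fibre (r : {ffun 'I_L -> 'I_L.+1}) :
  (#|[pred w : {ffun 'I_L -> 'I_N} | rank_vec w == r]| <= L.+1 ^ N)%N.
Proof.
pose counts (w : {ffun 'I_L -> 'I_N}) : {ffun 'I_N -> 'I_L.+1} :=
  [ffun k : 'I_N => inord (count_le w k)].
have <- : #|{ffun 'I_N -> 'I_L.+1}| = (L.+1 ^ N)%N by rewrite card_ffun !card_ord.
apply: (leq_card_in counts) => w w'; rewrite !inE => /eqP rw /eqP rw' eq_counts.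
apply: rank_vec_count_le_inj => [|k]; first by rewrite rw rw'.
move/ffunP/(_ k): eq_counts; rewrite !ffunE => /(congr1 val).
by rewrite /= !inordK // card_lt_ordS ?card_ord.
Qed.

End RankVector.

Lemma fine_measure_bigcup_pred (R : realType) (dO : measure_display)
    (O : measurableType dO) (mu : {finite_measure set O -> \bar R})
    (I : finType) (Q : pred I) (E : I -> set O) :
  (forall i, measurable (E i)) -> trivIset setT E ->
  fine (mu (\bigcup_(i in [set` Q]) E i)) = \sum_(i | Q i) fine (mu (E i)).
Proof.
move=> mE tE.
rewrite measure_fin_bigcup ?finite_finset //; last exact: sub_trivIset tE.
rewrite -(@bigfs _ _ _ _ (index_enum I)) ?index_enum_uniq //; last first.
  by move=> i _; rewrite mem_index_enum.
rewrite (eq_bigr (fun i => (fine (mu (E i)))%:E)) ?sumEFin // => i _.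
by rewrite fineK ?fin_num_measure.
Qed.

Section WordEvents.
Variables (R : realType) (dO : measure_display) (O : measurableType dO).
Variables (P : probability O R) (T : O -> O) (d : nat) (f : O -> d.-tuple R).
Variables (N : nat) (C : 'I_N -> set (d.-tuple R)).
Hypotheses (mT : measurable_fun setT T) (mC : forall i, measurable (f @^-1` C i)).
Hypothesis dC : forall i j : 'I_N, i != j -> C i `&` C j = set0.

Lemma measurable_iter k : measurable_fun setT (iter k T).
Proof.
by elim: k => [|k IH]; [exact: measurable_id|exact: measurableT_comp mT IH].
Qed.

Lemma measurable_word_event L (w : {ffun 'I_L -> 'I_N}) :
  measurable (word_event T f C w).
Proof.
have -> : word_event T f C w =
    \bigcap_(k in [set: 'I_L]) (iter k T @^-1` (f @^-1` C (w k))).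
  by apply/seteqP; split => [om wom k _|om wom k]; [exact: wom|exact: wom].
apply: fin_bigcap_measurable; first exact: finite_finset.
by move=> k _; rewrite -[X in measurable X]setTI; exact: measurable_iter.
Qed.

Lemma trivIset_word_event L : trivIset setT (@word_event R dO O T d f N C L).
Proof.
move=> w w' _ _ [om [wom w'om]]; apply/ffunP => k; apply/eqP/negP => /negP neq.
by have := dC neq; rewrite -subset0 => /(_ (X T f k om)); apply; split.
Qed.

Definition word_prob L (w : {ffun 'I_L -> 'I_N}) := fine (P (word_event T f C w)).

Lemma word_prob_ge0 L w : 0 <= @word_prob L w.
Proof. exact/fine_ge0/measure_ge0. Qed.

Lemma sum_word_prob_le1 L : \sum_w @word_prob L w <= 1.
Proof.
have mU : measurable (\bigcup_(w in [set` predT]) @word_event R dO O T d f N C L w).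
  apply: fin_bigcup_measurable => [|w _]; first exact: finite_finset.
  exact: measurable_word_event.
rewrite -(fine_measure_bigcup_pred P predT (@measurable_word_event L)
  (@trivIset_word_event L)).
by rewrite -lee_fin fineK ?fin_num_measure ?probability_le1.
Qed.

Lemma word_prob_le1 L w : @word_prob L w <= 1.
Proof.
apply: le_trans (sum_word_prob_le1 L); rewrite (bigD1 w) //= lerDl.
by apply: sumr_ge0 => *; exact: word_prob_ge0.
Qed.

Lemma rank_event_prob L (r : {ffun 'I_L -> 'I_L.+1}) :
  fine (P (rank_event T f C r)) = image_mass (@rank_vec N L) (@word_prob L) r.
Proof.
rewrite /image_mass /word_prob.
rewrite -(fine_measure_bigcup_pred P _ (@measurable_word_event L)
  (@trivIset_word_event L)).
congr (fine (P _)); apply/seteqP; split => [om [w [wom <-]]|om [w /= /eqP <- wom]].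
  by exists w => //; exact: eqxx.
by exists w.
Qed.

Lemma block_entropy_ge0 L : 0 <= block_entropy P T f C L.
Proof. by apply: shannon_ge0 => w; rewrite word_prob_ge0 word_prob_le1. Qed.

Lemma rank_block_entropy_bounds L :
  rank_block_entropy P T f C L <= block_entropy P T f C L
  <= rank_block_entropy P T f C L + N%:R * log2 L.+1%:R.
Proof.
have -> : rank_block_entropy P T f C L =
    shannon (image_mass (@rank_vec N L) (@word_prob L)).
  by congr shannon; apply/funext => r; rewrite rank_event_prob.
rewrite -log2X // -natrX; apply: shannon_image_bounds.
- exact: word_prob_ge0.
- exact: sum_word_prob_le1.
- by rewrite ler1n expn_gt0.
- by move=> r; rewrite ler_nat card_rank_vec_fibre.
Qed.

Lemma block_entropy_le L :
  block_entropy P T f C L <= L%:R * log2 N.+1%:R + 1 / ln 2.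
Proof.
rewrite -log2X // -natrX; apply: shannon_le_log2.
- exact: word_prob_ge0.
- exact: sum_word_prob_le1.
- by rewrite ler1n expn_gt0.
- by rewrite ler_nat card_ffun !card_ord; case: (L) => // n; rewrite leq_exp2r.
Qed.

End WordEvents.

Section Limits.
Variable R : realType.

Lemma ln_le_mulr (e x : R) : 0 < e -> 0 < x -> ln x <= e * x - 1 - ln e.
Proof.
move=> e0 x0; have := ln_le_subr1 (mulr_gt0 e0 x0).
rewrite lnM ?posrE //; lra.
Qed.

(* With [c = e / 3]: [ln (L + 1) <= c (L + 1) - 1 - ln c <= 3 c (L - 1)]
   as soon as [2 c L >= |ln c| + 4 c]. *)
Lemma cvg_ln_div_pred : (fun L : nat => ln L.+1%:R / L.-1%:R) @ \oo --> (0 : R).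
Proof.
apply/cvgr0Pnorm_le => e e0; set c := e / 3.
have c0 : 0 < c by rewrite divr_gt0.
near=> L.
have L2 : (2 <= L)%N by near: L; exact: nbhs_infty_ge.
have LK : (`|ln c| + 4 * c) / (2 * c) <= L%:R by near: L; exact: nbhs_infty_ger.
rewrite ler_pdivrMr ?mulr_gt0 // in LK.
have m0 : 0 < L.-1%:R :> R by rewrite ltr0n; lia.
have lnL0 : 0 <= ln L.+1%:R :> R by rewrite ln_ge0 // ler1n.
rewrite ger0_norm; last by rewrite divr_ge0 // ltW.
rewrite ler_pdivrMr // -subn1 natrB ?(ltnW L2) // -natr1.
have := ln_le_mulr c0 (ltr0n R L.+1); rewrite -natr1.
have : - ln c <= `|ln c| by rewrite -normrN ler_norm.
have -> : e = 3 * c by rewrite /c mulrC divfK ?pnatr_eq0.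
nra.
Unshelve. all: by end_near.
Qed.

Lemma cvg_inv_pred : (fun L : nat => (L.-1%:R)^-1) @ \oo --> (0 : R).
Proof.
rewrite -(cvg_shiftn 2); apply: cvg_trans cvg_harmonic; apply: near_eq_cvg.
by near=> n; rewrite /= addn2.
Unshelve. all: by end_near.
Qed.

Lemma div_sub_div_bounds (x y D B m : R) :
  0 < m -> 0 <= x -> y <= x <= y + D -> x <= (m + 2) * B ->
  - (2 * B) / m <= x / (m + 1) - y / m <= D / m.
Proof.
move=> m0 x0 /andP[yx xD] xB; have m1 : 0 < m + 1 by lra.
have m2 : 0 < m + 2 by lra.
have B0 : 0 <= B by rewrite -(pmulr_rge0 B m2); lra.
have -> : x / (m + 1) - y / m = (x * m - y * (m + 1)) / (m * (m + 1)).
  by field; rewrite !gt_eqF.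
have -> : - (2 * B) / m = - (2 * B) * (m + 1) / (m * (m + 1)).
  by field; rewrite !gt_eqF.
have -> : D / m = D * (m + 1) / (m * (m + 1)) by field; rewrite !gt_eqF.
rewrite !ler_pM2r ?invr_gt0 ?mulr_gt0 //; apply/andP; split; nra.
Qed.

Lemma normalized_block_entropies_sub_cvg0 (x y : nat -> R) (K B : R) :
  (forall L, 0 <= x L) -> (forall L, y L <= x L <= y L + K * ln L.+1%:R) ->
  (forall L, x L <= L.+1%:R * B) ->
  (fun L => x L / L%:R - y L / L.-1%:R) @ \oo --> 0.
Proof.
move=> x0 xy xB.
apply: (@squeeze_cvgr _ _ _ _ (fun L => - (2 * B) * (L.-1%:R)^-1)
  (fun L => K * (ln L.+1%:R / L.-1%:R))); last 2 first.
- by rewrite -(mulr0 (- (2 * B))); exact: cvgMl_tmp cvg_inv_pred.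
- by rewrite -(mulr0 K); exact: cvgMl_tmp cvg_ln_div_pred.
near=> L; have L2 : (2 <= L)%N by near: L; exact: nbhs_infty_ge.
have m0 : 0 < L.-1%:R :> R by rewrite ltr0n; lia.
have eL : L%:R = L.-1%:R + 1 :> R by rewrite natr1 (prednK (ltnW L2)).
have eLS : L.+1%:R = L.-1%:R + 2 :> R by rewrite -natr1 eL -addrA.
by rewrite eL mulrA; apply: div_sub_div_bounds; rewrite // -eLS.
Unshelve. all: by end_near.
Qed.

(* Holds whether or not the limits exist: [limn] chooses from the set of
   limits, and the two sequences have the same limits. *)
Lemma limn_eq_of_sub_cvg0 (a b : nat -> R) :
  (fun n => a n - b n) @ \oo --> 0 -> limn a = limn b.
Proof.
move=> ab0; have same_limits (l : R) : (a @ \oo --> l) <-> (b @ \oo --> l).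
  split=> [al|bl].
    have -> : b = a - (fun n => a n - b n).
      by apply/funext => n /=; rewrite opprB addrC subrK.
    by rewrite -(subr0 l); exact: cvgB.
  have -> : a = b + (fun n => a n - b n).
    by apply/funext => n /=; rewrite addrC subrK.
  by rewrite -(addr0 l); exact: cvgD.
by rewrite /lim /lim_in; congr get; apply/funext => l; apply/propext.
Qed.

End Limits.

Lemma permutation_entropy_rateE (R : realType) (dO : measure_display)
    (O : measurableType dO) (P : probability O R) (T : O -> O) (d : nat)
    (f : O -> d.-tuple R) (N : nat) (C : 'I_N -> set (d.-tuple R)) :
  measurable_fun setT T -> (forall i, measurable (f @^-1` C i)) ->
  (forall i j : 'I_N, i != j -> C i `&` C j = set0) ->
  permutation_entropy_rate P T f C = metric_entropy_rate P T f C.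
Proof.
move=> mT mC dC; apply/esym/limn_eq_of_sub_cvg0.
have ln2_ge0 := ltW (@ln2_gt0 R).
apply: (@normalized_block_entropies_sub_cvg0 _ _ _ (N%:R / ln 2)
  (log2 N.+1%:R + 1 / ln 2)) => L.
- exact: block_entropy_ge0.
- by rewrite mulrAC -mulrA; exact: rank_block_entropy_bounds.
- apply: le_trans (block_entropy_le P mT mC dC L) _.
  have log2N_ge0 : 0 <= log2 N.+1%:R :> R by rewrite divr_ge0 ?ln_ge0 ?ler1n.
  have : 0 <= L%:R * (1 / ln 2) :> R by rewrite mulr_ge0 ?divr_ge0.
  rewrite -[L.+1%:R]natr1 mulrDl mul1r mulrDr; lra.
Qed.

Theorem theorem2 (R : realType) (dO : measure_display) (O : measurableType dO)
  (P : probability O R) (T : O -> O) (d : nat) (f : O -> d.-tuple R)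
  (a b : R) (I : set R)
  (C : forall N : nat, 'I_N -> set (d.-tuple R)) :
  (1 <= d)%N ->
  (* I is a proper (bounded, non-degenerate) interval with endpoints a < b *)
  a < b -> `]a, b[ `<=` I -> I `<=` `[a, b] ->
  (* stationarity (T preserves P) and ergodicity *)
  measurable_fun [set: O] T ->
  (forall A, measurable A -> P (T @^-1` A) = P A) ->
  (forall A, measurable A -> T @^-1` A = A -> P A = 0%:E \/ P A = 1%:E) ->
  (* the source X_n = f o T^(n-1) with values in I^d *)
  measurable_fun [set: O] f ->
  (forall om, cube (d:=d) I (f om)) ->
  (* uniform discretizations at resolution Delta_N = lambda(I^d)/N *)
  (forall N, (0 < N)%N -> uniform_partition (cube (d:=d) I) (C N)) ->
  (forall N (i : 'I_N), measurable (f @^-1` C N i)) ->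
  let Delta N := fine (lebesgue_outer (cube (d:=d) I)) / N%:R in
  forall l : \bar R,
    ((fun N => (permutation_entropy_rate P T f (C N) + log2 (Delta N))%:E)
        @ \oo --> l)
    <->
    ((fun N => (metric_entropy_rate P T f (C N) + log2 (Delta N))%:E)
        @ \oo --> l).
Proof.
move=> _ _ _ _ mT _ _ _ _ partition mC Delta l.
suff -> : (fun N => (permutation_entropy_rate P T f (C N) + log2 (Delta N))%:E) =
          (fun N => (metric_entropy_rate P T f (C N) + log2 (Delta N))%:E) by [].
apply/funext => N; congr (_ + _)%:E; apply: permutation_entropy_rateE => // i j.
have [disjoint _ _ _] := partition N (leq_ltn_trans (leq0n i) (ltn_ord i)).
exact: disjoint.
Qed.
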